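(* Let $K$ satisfy (K1) and (K2). For any $a,b\in[0,1]$, $$\sum_{k=1}^n\big(W_{nk}(a)-W_{nk}(b)\big)^2\le W\,n^{-1}h^{-3}\Big(\frac{8L_2}{\lambda_0}|a-b|\wedge h\Big)^2 .$$ In particular, if $\varepsilon_1,\dots,\varepsilon_n$ are i.i.d. $\mathcal N(0,\sigma^2)$, then $R_{a,b}:=\sum_{k=1}^nW_{nk}(a)\varepsilon_k-\sum_{k=1}^nW_{nk}(b)\varepsilon_k$ satisfies $\mathbb V(R_{a,b})\le\sigma^2Wn^{-1}h^{-3}\big(\frac{8L_2}{\lambda_0}|a-b|\wedge h\big)^2$.
   Context: $x_k=k/n$. (K1): $K$ nonnegative, $\int K=1$, supported in $[-1,1]$, $K_{\min}\mathbf 1_{\{|u|\le\Delta\}}\le K\le K_{\max}$ for constants $K_{\min},K_{\max},\Delta>0$. (K2): $K$ Lipschitz with constant $L_K$. For $\beta>0$ and $k_0=\lceil\beta\rceil-1$: $U(u)=(1,u,\dots,u^{k_0}/k_0!)^\top$, $\mathcal B_{nx}=\frac1{nh}\sum_lU(\tfrac{x_l-x}h)U(\tfrac{x_l-x}h)^\top K(\tfrac{x_l-x}h)$, $W_{nk}(x)=\frac1{nh}U(0)^\top\mathcal B_{nx}^{-1}U(\tfrac{x_k-x}h)K(\tfrac{x_k-x}h)$ (weights of the local polynomial estimator of order $k_0$, bandwidth $h$). Standing assumption: $h\ge1/(2n)$ and $\lambda_0>0$ is a constant with smallest eigenvalue of $\mathcal B_{nx}$ at least $\lambda_0$ for all $x\in[0,1]$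 ($n$ large). Constants: $C_*=8K_{\max}/\lambda_0$, $L_1=\sqrt e(L_K+K_{\max})$, $L_2=2\lceil\beta\rceil K_{\max}+\lceil\beta\rceil L_K$, $\widetilde C_*=L_1/(8L_2)+\sqrt eK_{\max}/\lambda_0$, $W=\max(4C_*^2,4\widetilde C_*^2)$. *)

From HB Require Import structures.
From mathcomp Require Import all_boot all_order all_algebra.
From mathcomp Require Import all_classical all_reals all_analysis.
Set Implicit Arguments. Unset Strict Implicit. Unset Printing Implicit Defensive.
Import Order.TTheory GRing.Theory Num.Theory.
Local Open Scope ring_scope.

Section LocPoly.
Variable R : realType.

(* k0 = ceil(beta) - 1 (a natural number since beta > 0) *)
Definition k0 (beta : R) : nat := `|Num.ceil beta - 1|%N.

Definition Uvec (k : nat) (u : R) : 'cV[R]_k.+1 :=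
  \col_(j < k.+1) (u ^+ j / (j`!)%:R).

Definition xpt (n l : nat) : R := l%:R / n%:R.

Definition Bmat (K : R -> R) (k n : nat) (h x : R) : 'M[R]_k.+1 :=
  (n%:R * h)^-1 *: \sum_(1 <= l < n.+1)
     (K ((xpt n l - x) / h) *: (Uvec k ((xpt n l - x) / h) *m (Uvec k ((xpt n l - x) / h))^T)).

Definition Wnk (K : R -> R) (k n : nat) (h x : R) (i : nat) : R :=
  (n%:R * h)^-1 *
  ((Uvec k 0)^T *m invmx (Bmat K k n h x) *m Uvec k ((xpt n i - x) / h)) ord0 ord0 *
  K ((xpt n i - x) / h).

Definition Cstar (Kmax lambda0 : R) : R := 8 * Kmax / lambda0.
Definition L1c (LK Kmax : R) : R := Num.sqrt (expR 1) * (LK + Kmax).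
Definition L2c (beta Kmax LK : R) : R :=
  2 * (Num.ceil beta)%:~R * Kmax + (Num.ceil beta)%:~R * LK.
Definition Ctilde (beta Kmax LK lambda0 : R) : R :=
  L1c LK Kmax / (8 * L2c beta Kmax LK) + Num.sqrt (expR 1) * Kmax / lambda0.
Definition Wconst (beta Kmax LK lambda0 : R) : R :=
  Num.max (4 * Cstar Kmax lambda0 ^+ 2) (4 * Ctilde beta Kmax LK lambda0 ^+ 2).

End LocPoly.

(* Write W_nk(x) = (nh)^-1 e_0^T B_x^-1 g(z_k) with g(z) = K(z) U(z) and
   z_k = (x_k - x)/h.  The eigenvalue bound makes B_x coercive with constant lambda0,
   so |B_x^-1 u| <= |u| / lambda0, and at most 4nh design points satisfy |z_k| <= 1.
   Weighting the i-th coordinate by max(1,i)/i!, whose squares sum to at most 10/3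
   for every order, gives |g(z)|^2 <= 10/3 Kmax^2 and
   |g(z) - g(z')|^2 <= 10/3 (LK + 2 Kmax)^2 |z - z'|^2, the first vanishing for
   |z| > 1 and the second when both |z|, |z'| > 1.  Hence every W_nk(x)^2 is of
   order Kmax^2 / (lambda0 nh)^2, which yields the bound with h; and the resolvent
   identity B_a^-1 g_a - B_b^-1 g_b = B_a^-1 (g_a - g_b) + B_a^-1 (B_b - B_a) B_b^-1 g_b,
   where the entries of B_b - B_a are O((LK + 2 Kmax) |a - b| / h), yields the bound
   with |a - b|.  Both fit under 4 C_*^2 = 256 (Kmax / lambda0)^2 since
   LK + 2 Kmax <= L_2. *)

From HB Require Import structures.
From mathcomp Require Import all_boot all_order all_algebra.
From mathcomp Require Import all_classical all_reals all_analysis.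
From mathcomp Require Import ring lra zify.
Import Order.TTheory GRing.Theory Num.Theory.
Local Open Scope ring_scope.
Set Implicit Arguments. Unset Strict Implicit. Unset Printing Implicit Defensive.

Section Inequalities.
Variable R : realFieldType.

Lemma quadratic_ge0_disc (a b c : R) : 0 <= a ->
  (forall t, 0 <= a * t ^+ 2 + 2 * b * t + c) -> b ^+ 2 <= a * c.
Proof.
rewrite le0r => /orP[/eqP-> | a_gt0] ge0.
  have [-> | b_neq0] := eqVneq b 0; first by rewrite expr0n mul0r.
  have := ge0 (- (c + 1) / (2 * b)).
  have -> : 0 * (- (c + 1) / (2 * b)) ^+ 2 + 2 * b * (- (c + 1) / (2 * b)) + c = -1.
    by field.
  by rewrite ler0N1.
have := mulr_ge0 (ltW a_gt0) (ge0 (- b / a)).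
have -> : a * (a * (- b / a) ^+ 2 + 2 * b * (- b / a) + c) = a * c - b ^+ 2.
  by field; rewrite lt0r_neq0.
by rewrite subr_ge0.
Qed.

Lemma mulr_le_sqr_weighted (x y t : R) : 0 < t ->
  x * y <= (t * x ^+ 2 + t^-1 * y ^+ 2) / 2.
Proof.
move=> t_gt0; have tV_ge0 : 0 <= t^-1 by rewrite invr_ge0 ltW.
have := mulr_ge0 tV_ge0 (sqr_ge0 (t * x - y)).
have -> : t^-1 * (t * x - y) ^+ 2 = t * x ^+ 2 - 2 * (x * y) + t^-1 * y ^+ 2.
  by field; rewrite lt0r_neq0.
lra.
Qed.

Lemma sqrD_le_weighted (x y t : R) : 0 < t ->
  (x + y) ^+ 2 <= (1 + t) * x ^+ 2 + (1 + t^-1) * y ^+ 2.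
Proof.
move=> t_gt0; have := mulr_le_sqr_weighted x y t_gt0.
have -> : (x + y) ^+ 2 = x ^+ 2 + 2 * (x * y) + y ^+ 2 by ring.
lra.
Qed.

Lemma sqr_le_sqr_norm (x y : R) : `|x| <= y -> x ^+ 2 <= y ^+ 2.
Proof.
move=> xy; rewrite -real_normK ?num_real // !expr2.
by apply: ler_pM => //; apply: normr_ge0.
Qed.

Lemma cauchy_schwarz_sum (I : finType) (u v : I -> R) :
  (\sum_i u i * v i) ^+ 2 <= (\sum_i u i ^+ 2) * (\sum_i v i ^+ 2).
Proof.
apply: quadratic_ge0_disc => [|t]; first by apply: sumr_ge0 => i _; apply: sqr_ge0.
have -> : (\sum_i u i ^+ 2) * t ^+ 2 + 2 * (\sum_i u i * v i) * t + \sum_i v i ^+ 2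
    = \sum_i (t * u i + v i) ^+ 2.
  rewrite mulr_sumr !mulr_suml -!big_split /=.
  by apply: eq_bigr => i _; ring.
by apply: sumr_ge0 => i _; apply: sqr_ge0.
Qed.

End Inequalities.

Section QuadraticForms.
Variables (R : realFieldType) (m : nat).
Implicit Types (u v w : 'cV[R]_m) (M N : 'M[R]_m).

Definition sqnorm v := \sum_i v i 0 ^+ 2.
Definition frobsq M := \sum_i \sum_j M i j ^+ 2.
Definition bform M u v := \sum_i u i 0 * (M *m v) i 0.
Definition qform M v := bform M v v.

Lemma sqnorm_ge0 v : 0 <= sqnorm v.
Proof. by apply: sumr_ge0 => i _; apply: sqr_ge0. Qed.

Lemma sqnorm0 : sqnorm 0 = 0.
Proof. by rewrite /sqnorm big1 // => i _; rewrite mxE expr0n. Qed.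

Lemma sqnorm_gt0 v : v != 0 -> 0 < sqnorm v.
Proof.
move=> v_neq0; rewrite lt_def sqnorm_ge0 andbT; apply: contra v_neq0 => /eqP v0.
apply/eqP/matrixP => i j; rewrite ord1 mxE.
have /(_ i isT)/eqP := psumr_eq0P (fun k _ => sqr_ge0 (v k 0)) v0.
by rewrite sqrf_eq0 => /eqP.
Qed.

Lemma entry_sqr_le_sqnorm v i : v i 0 ^+ 2 <= sqnorm v.
Proof.
by rewrite /sqnorm (bigD1 i) //= lerDl; apply: sumr_ge0 => j _; apply: sqr_ge0.
Qed.

Lemma frobsq_ge0 M : 0 <= frobsq M.
Proof. by apply: sumr_ge0 => i _; apply: sumr_ge0 => j _; apply: sqr_ge0. Qed.

Lemma sqnorm_mulmx_le M v : sqnorm (M *m v) <= frobsq M * sqnorm v.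
Proof.
rewrite /sqnorm /frobsq mulr_suml; apply: ler_sum => i _.
by rewrite mxE; apply: cauchy_schwarz_sum (fun j => M i j) (fun j => v j 0).
Qed.

Lemma qform0 M : qform M 0 = 0.
Proof. by rewrite /qform /bform big1 // => i _; rewrite mxE mul0r. Qed.

Lemma qformB_scalar M (mu : R) v : qform (M - mu%:M) v = qform M v - mu * sqnorm v.
Proof.
rewrite /qform /bform /sqnorm mulr_sumr -sumrB; apply: eq_bigr => i _.
by rewrite mulmxBl mul_scalar_mx !mxE; ring.
Qed.

Lemma qformD M N v : qform (M + N) v = qform M v + qform N v.
Proof.
by rewrite /qform /bform -big_split; apply: eq_bigr => i _; rewrite mulmxDl mxE mulrDr.
Qed.

Lemma qformZ a M v : qform (a *: M) v = a * qform M v.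
Proof.
by rewrite /qform /bform mulr_sumr; apply: eq_bigr => i _; rewrite -scalemxAl mxE mulrCA.
Qed.

Lemma qform_sum (I : Type) (r : seq I) (P : pred I) (F : I -> 'M[R]_m) v :
  qform (\sum_(i <- r | P i) F i) v = \sum_(i <- r | P i) qform (F i) v.
Proof.
elim/big_rec2: _ => [|i x M _ <-]; last by rewrite qformD.
by rewrite /qform /bform big1 // => i _; rewrite mul0mx mxE mulr0.
Qed.

Lemma qform_outer u v : qform (u *m u^T) v = (\sum_i u i 0 * v i 0) ^+ 2.
Proof.
rewrite /qform /bform expr2 mulr_suml; apply: eq_bigr => i _.
rewrite -mulmxA mxE big_ord1 mulrA [v i 0 * _]mulrC; congr (_ * _).
by rewrite mxE; apply: eq_bigr => j _; rewrite mxE.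
Qed.

Lemma sqnorm_delta i : sqnorm (delta_mx i 0) = 1.
Proof.
rewrite /sqnorm (bigD1 i) //= big1 => [|j ji]; first by rewrite mxE !eqxx expr1n addr0.
by rewrite mxE (negbTE ji) expr0n.
Qed.

Lemma qform_delta M i : qform M (delta_mx i 0) = M i i.
Proof.
rewrite /qform /bform (bigD1 i) //= big1 => [|j ji]; last by rewrite mxE (negbTE ji) mul0r.
by rewrite -colE !mxE !eqxx mul1r addr0.
Qed.

Section Symmetric.
Variable N : 'M[R]_m.
Hypothesis N_sym : N^T = N.

Lemma bformC v w : bform N v w = bform N w v.
Proof.
rewrite /bform.
under eq_bigr do rewrite mxE mulr_sumr.
rewrite exchange_big /=; apply: eq_bigr => j _.
rewrite mxE mulr_sumr; apply: eq_bigr => i _.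
have -> : N j i = N i j by rewrite -[in LHS]N_sym mxE.
ring.
Qed.

Hypothesis N_psd : forall v, 0 <= qform N v.

Lemma psd_cauchy_schwarz v w :
  bform N w v ^+ 2 <= qform N w * qform N v.
Proof.
apply: quadratic_ge0_disc => [|t]; first exact: N_psd.
have := N_psd (t *: w + v).
suff -> : qform N (t *: w + v)
    = qform N w * t ^+ 2 + 2 * bform N w v * t + qform N v by [].
transitivity (t ^+ 2 * qform N w + t * bform N v w + t * bform N w v + qform N v).
  rewrite /qform /bform mulmxDr -scalemxAr !mulr_sumr -!big_split /=.
  by apply: eq_bigr => i _; rewrite !mxE; ring.
by rewrite bformC; ring.
Qed.

End Symmetric.
End QuadraticForms.

Section Coercivity.
Variables (R : realFieldType) (m : nat).
Implicit Types (u v w : 'cV[R]_m) (M N : 'M[R]_m).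

Definition coercive (lam : R) M := forall v, lam * sqnorm v <= qform M v.

Lemma dot_le_sqnorm u v : \sum_i u i 0 * v i 0 <= (sqnorm u + sqnorm v) / 2.
Proof.
rewrite mulrDl !mulr_suml -big_split /=; apply: ler_sum => i _.
by have := mulr_le_sqr_weighted (u i 0) (v i 0) ltr01; rewrite invr1 !mul1r mulrDl.
Qed.

Lemma sym_psd_unitmx_coercive N : N^T = N -> (forall v, 0 <= qform N v) ->
  N \in unitmx -> exists2 c, 0 < c & coercive c N.
Proof.
move=> N_sym N_psd N_unit; set F := frobsq N; set G := frobsq (invmx N).
have F_ge0 : 0 <= F := frobsq_ge0 N.
have G_ge0 : 0 <= G := frobsq_ge0 (invmx N).
have D_ge0 : 0 <= G * ((1 + F) / 2) by rewrite mulr_ge0 // divr_ge0 // addr_ge0.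
exists (1 + G * ((1 + F) / 2))^-1; first by rewrite invr_gt0 ltr_pwDl.
move=> v; set w := N *m v.
have qw_le : qform N w <= (1 + F) / 2 * sqnorm w.
  apply: le_trans (dot_le_sqnorm _ _) _.
  have := sqnorm_mulmx_le N w; rewrite -/F; lra.
have w_le : sqnorm w <= (1 + F) / 2 * qform N v.
  have [w0 | w_gt0] := eqVneq (sqnorm w) 0.
    by rewrite w0 mulr_ge0 // divr_ge0 // addr_ge0.
  have {}w_gt0 : 0 < sqnorm w by rewrite lt_def w_gt0 sqnorm_ge0.
  have := psd_cauchy_schwarz N_sym N_psd v w.
  have -> : bform N w v = sqnorm w by apply: eq_bigr => i _.
  move=> /le_trans/(_ (ler_wpM2r (N_psd v) qw_le)).
  by rewrite expr2 mulrAC ler_pM2r.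
have v_le : sqnorm v <= G * sqnorm w.
  by have := sqnorm_mulmx_le (invmx N) w; rewrite mulKmx.
rewrite mulrC ler_pdivrMr ?ltr_pwDl //.
have := ler_wpM2l G_ge0 w_le; have := N_psd v; nra.
Qed.

Lemma coercive_unitmx lam M : 0 < lam -> coercive lam M -> M \in unitmx.
Proof.
move=> lam_gt0 M_coer; rewrite unitmxE unitfE; apply/negP => /det0P[r r_neq0 rM].
have rT_neq0 : r^T != 0 by rewrite -trmx0 (inj_eq trmx_inj).
have : qform M r^T = 0.
  transitivity (\sum_j (r *m M) 0 j * r 0 j); last first.
    by rewrite rM big1 // => j _; rewrite mxE mul0r.
  rewrite /qform /bform; under eq_bigr do rewrite [(M *m _) _ _]mxE mulr_sumr.
  rewrite exchange_big /=; apply: eq_bigr => j _.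
  rewrite [(r *m M) _ _]mxE mulr_suml; apply: eq_bigr => i _; rewrite !mxE; ring.
move: (M_coer r^T) => /[swap] ->; apply/negP; rewrite -ltNge.
exact: mulr_gt0 (sqnorm_gt0 rT_neq0).
Qed.

Lemma sqnorm_invmx_le lam M u : 0 < lam -> coercive lam M ->
  sqnorm (invmx M *m u) <= sqnorm u / lam ^+ 2.
Proof.
move=> lam_gt0 M_coer; set w := invmx M *m u.
have Mw : M *m w = u by rewrite mulKVmx // (coercive_unitmx lam_gt0 M_coer).
have [w0 | w_neq0] := eqVneq (sqnorm w) 0.
  by rewrite w0 divr_ge0 ?sqnorm_ge0 ?sqr_ge0.
have w_gt0 : 0 < sqnorm w by rewrite lt_def w_neq0 sqnorm_ge0.
have lw_le : lam * sqnorm w <= \sum_i w i 0 * u i 0 by rewrite -Mw; exact: M_coer.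
have sq_le : (lam * sqnorm w) ^+ 2 <= sqnorm w * sqnorm u.
  apply: le_trans (cauchy_schwarz_sum (fun i => w i 0) (fun i => u i 0)).
  by apply: sqr_le_sqr_norm; rewrite ger0_norm // mulr_ge0 ?sqnorm_ge0 ?ltW.
rewrite ler_pdivlMr ?exprn_gt0 // -(ler_pM2l w_gt0).
by have -> : sqnorm w * (sqnorm w * lam ^+ 2) = (lam * sqnorm w) ^+ 2 by ring.
Qed.

End Coercivity.

Section Rayleigh.
Variables (R : realType) (m : nat) (M : 'M[R]_m).
Hypotheses (M_sym : M^T = M) (M_psd : forall v, 0 <= qform M v).

(* With mu the infimum of the Rayleigh quotient, either M - mu is singular, so that mu
   is an eigenvalue, or it is positive definite, which contradicts the minimality of mu. *)
Lemma eigenvalue_lb_coercive (lam : R) :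
  (forall mu, eigenvalue M mu -> lam <= mu) -> coercive lam M.
Proof.
move=> lam_le v; have [-> | v_neq0] := eqVneq v 0; first by rewrite qform0 sqnorm0 mulr0.
pose S := [set r : R | exists2 u : 'cV[R]_m, u != 0 & r = qform M u / sqnorm u]%classic.
have S_lb : has_lbound S by exists 0 => _ [u _ ->]; rewrite divr_ge0 ?sqnorm_ge0.
set mu := inf S.
have mu_coer : coercive mu M.
  move=> u; have [-> | u_neq0] := eqVneq u 0; first by rewrite qform0 sqnorm0 mulr0.
  by rewrite -ler_pdivlMr ?sqnorm_gt0 //; apply: ge_inf => //; exists u.
set N := M - mu%:M.
have N_sym : N^T = N by rewrite /N linearB /= tr_scalar_mx M_sym.
have N_psd u : 0 <= qform N u by rewrite qformB_scalar subr_ge0.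
have [/eqP/det0P[r r_neq0 rN] | detN_neq0] := eqVneq (\det N) 0.
  have mu_eig : eigenvalue M mu.
    apply/eigenvalueP; exists r => //.
    by move: rN; rewrite mulmxBr mul_mx_scalar => /eqP; rewrite subr_eq0 => /eqP.
  by apply: le_trans (mu_coer v); rewrite ler_wpM2r ?sqnorm_ge0 ?lam_le.
have N_unit : N \in unitmx by rewrite unitmxE unitfE.
have [c c_gt0 N_coer] := sym_psd_unitmx_coercive N_sym N_psd N_unit.
suff : mu + c <= mu by rewrite gerDl leNgt c_gt0.
apply: lb_le_inf => [|_ [u u_neq0 ->]]; first by exists (qform M v / sqnorm v), v.
rewrite ler_pdivlMr ?sqnorm_gt0 //; have := N_coer u; rewrite qformB_scalar; lra.
Qed.

End Rayleigh.

Lemma normr_subXX_le (R : realFieldType) (z z' : R) (r : nat) :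
  `|z| <= 1 -> `|z'| <= 1 -> `|z ^+ r - z' ^+ r| <= r%:R * `|z - z'|.
Proof.
move=> hz hz'; rewrite subrXX normrM mulrC ler_wpM2r //.
apply: le_trans (ler_norm_sum _ _ _) _.
apply: le_trans (_ : \sum_(i < r) (1 : R) <= _); last by rewrite sumr_const card_ord.
by apply: ler_sum => i _; rewrite normrM !normrX mulr_ile1 // exprn_ile1.
Qed.

Section UnitIndicator.
Variable R : realFieldType.
Implicit Types z : R.

Definition unit_ind z : R := ((`|z| <= 1)%R : bool)%:R.
Definition unit_ind2 z z' : R := ((`|z| <= 1) || (`|z'| <= 1))%R%:R.

Lemma unit_ind_ge0 z : 0 <= unit_ind z.
Proof. exact: ler0n. Qed.

Lemma unit_ind2_ge0 z z' : 0 <= unit_ind2 z z'.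
Proof. exact: ler0n. Qed.

Lemma unit_ind_sqr z : unit_ind z ^+ 2 = unit_ind z.
Proof. by rewrite /unit_ind; case: (_ <= _); rewrite ?expr1n ?expr0n. Qed.

Lemma unit_ind2_sqr z z' : unit_ind2 z z' ^+ 2 = unit_ind2 z z'.
Proof. by rewrite /unit_ind2; case: (_ || _); rewrite ?expr1n ?expr0n. Qed.

Lemma unit_ind2_le z z' : unit_ind2 z z' <= unit_ind z + unit_ind z'.
Proof.
by rewrite /unit_ind2 /unit_ind; case: (_ <= 1); case: (_ <= 1); rewrite /=; lra.
Qed.

End UnitIndicator.

Section KernelMoments.
Variables (R : realFieldType) (K : R -> R) (Kmax LK : R).
Hypotheses (K_ge0 : forall u, 0 <= K u) (K_supp : forall u, 1 < `|u| -> K u = 0).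
Hypothesis K_ub : forall u, K u <= Kmax.
Hypothesis K_lip : forall u v, `|K u - K v| <= LK * `|u - v|.

Lemma Kmax_ge0 : 0 <= Kmax.
Proof. exact: le_trans (K_ge0 0) (K_ub 0). Qed.

Lemma normr_kmoment_le r z : `|K z * z ^+ r| <= Kmax * unit_ind z.
Proof.
rewrite /unit_ind; case: (leP `|z| 1) => hz /=; last by rewrite K_supp // mul0r normr0 mulr0.
by rewrite mulr1 normrM ger0_norm // -[X in _ <= X]mulr1 ler_pM // normrX exprn_ile1.
Qed.

Lemma kmoment_lipschitz r z z' :
  `|K z * z ^+ r - K z' * z' ^+ r| <= (LK + r%:R * Kmax) * `|z - z'| * unit_ind2 z z'.
Proof.
have LK_le : LK <= LK + r%:R * Kmax by rewrite lerDl mulr_ge0 ?Kmax_ge0.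
wlog hz : z z' / `|z| <= 1.
  move=> hwlog; case: (leP `|z| 1) => [/hwlog // | hz].
  case: (leP `|z'| 1) => [hz' | hz'].
    by rewrite distrC (distrC z) /unit_ind2 orbC; exact: hwlog.
  have -> : unit_ind2 z z' = 0 by rewrite /unit_ind2 !leNgt hz hz'.
  by rewrite !K_supp // !mul0r subr0 normr0 mulr0.
rewrite /unit_ind2 hz mulr1; case: (leP `|z'| 1) => hz'.
  have -> : K z * z ^+ r - K z' * z' ^+ r
      = (K z - K z') * z ^+ r + K z' * (z ^+ r - z' ^+ r) by ring.
  apply: le_trans (ler_normD _ _) _; rewrite [X in _ <= X]mulrDl.
  apply: lerD; rewrite normrM.
    by rewrite -[X in _ <= X]mulr1; apply: ler_pM; rewrite // normrX exprn_ile1.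
  rewrite ger0_norm // [r%:R * Kmax]mulrC -mulrA.
  by apply: ler_pM; rewrite // normr_subXX_le.
rewrite (K_supp hz') mul0r subr0 normrM ger0_norm //.
apply: le_trans (_ : LK * `|z - z'| <= _); last by rewrite ler_wpM2r.
rewrite -[X in _ <= X]mulr1; apply: ler_pM; rewrite ?normrX ?exprn_ile1 //.
by have := K_lip z z'; rewrite (K_supp hz') subr0 ger0_norm.
Qed.

End KernelMoments.

Lemma sum_nat_window (a b N : nat) :
  (\sum_(0 <= l < N) (a <= l <= b) = minn N b.+1 - a)%N.
Proof.
elim: N => [|N IH]; first by rewrite big_nil.
by rewrite big_nat_recr //= IH; case: (leqP a N); case: (leqP N b) => /=; lia.
Qed.

Lemma sum_near_le (R : archiRealFieldType) (c r : R) (N : nat) : 0 <= r ->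
  \sum_(0 <= l < N) ((`|l%:R - c| <= r)%R : bool)%:R <= 2 * r + 1.
Proof.
move=> r_ge0; set q := Num.truncn (c + r); set M := Num.truncn (2 * r).
have window l : `|l%:R - c| <= r -> (q - M <= l <= q)%N.
  rewrite ler_norml => /andP[lo hi].
  have cr_ge0 : 0 <= c + r by have := ler0n R l; lra.
  have l_le_q : (l <= q)%N by rewrite /q truncn_ge_nat //; lra.
  rewrite l_le_q andbT leq_subLR addnC -leq_subLR /M truncn_ge_nat ?natrB //; last by lra.
  by have := truncn_le (c + r); rewrite cr_ge0 -/q; lra.
apply: le_trans (_ : (\sum_(0 <= l < N) (q - M <= l <= q)%N)%:R <= _).
  rewrite natr_sum ler_sum // => l _.
  by case: (boolP (`|l%:R - c| <= r)) => [/window -> // | _]; exact: ler0n.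
rewrite sum_nat_window; apply: le_trans (_ : M.+1%:R <= _); first by rewrite ler_nat; lia.
by rewrite -addn1 natrD lerD2r truncn_le mulr_ge0.
Qed.

Section TaylorWeights.
Variable R : realFieldType.

(* The factor [maxn 1 i] absorbs the Lipschitz constant [i] of [z ^+ i] on [-1, 1]. *)
Definition taylor_weight (i : nat) : R := (maxn 1 i)%:R / (i`!)%:R.

Lemma taylor_weight_ge0 i : 0 <= taylor_weight i.
Proof. by rewrite divr_ge0. Qed.

Lemma invfact_le_taylor_weight i : (i`!)%:R^-1 <= taylor_weight i.
Proof. by rewrite -[X in X <= _]mul1r ler_wpM2r ?invr_ge0 // ler1n leq_maxl. Qed.

Lemma taylor_weightSS_sqr_le m : taylor_weight m.+2 ^+ 2 <= (4^-1) ^+ m.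
Proof.
have -> : taylor_weight m.+2 = (m.+1`!)%:R^-1.
  by rewrite /taylor_weight factS natrM (maxn_idPr _) // invfM mulrA mulfV ?mul1r.
have -> : (4^-1 : R) ^+ m = (((2 ^ m)%N)%:R ^+ 2)^-1.
  by rewrite natrX -exprM mulnC exprM -exprVn; congr (_ ^+ _); rewrite expr2 -natrM.
rewrite exprVn lef_pV2 ?posrE ?exprn_gt0 ?ltr0n ?expn_gt0 ?fact_gt0 //.
rewrite ler_sqr ?nnegrE ?ler0n // ler_nat.
by elim: m => [// | m IH]; rewrite expnS factS leq_mul.
Qed.

Lemma sum_taylor_weight_sqr_le m : \sum_(i < m) taylor_weight i ^+ 2 <= 10/3.
Proof.
have tail_le k : \sum_(0 <= i < k.+2) taylor_weight i ^+ 2 + 4/3 * (4^-1) ^+ k <= 10/3.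
  elim: k => [|k IH].
    rewrite !big_nat_recr //= big_nil /taylor_weight (maxn_idPl _) // (maxn_idPl _) //.
    by rewrite !factS fact0 /= muln1 divr1 expr1n expr0 add0r mulr1; lra.
  rewrite big_nat_recr //= [(4^-1) ^+ k.+1]exprS; have := taylor_weightSS_sqr_le k; lra.
rewrite -(big_mkord xpredT (fun i : nat => taylor_weight i ^+ 2)).
apply: le_trans (tail_le m); rewrite big_nat_recr //= big_nat_recr //=.
have := sqr_ge0 (taylor_weight m); have := sqr_ge0 (taylor_weight m.+1).
have : 0 <= 4/3 * (4^-1 : R) ^+ m by rewrite mulr_ge0 ?exprn_ge0 //; lra.
lra.
Qed.

Lemma sqnorm_le_taylor_weight m (v : 'cV[R]_m) c :
  (forall i, `|v i 0| <= c * taylor_weight i) -> sqnorm v <= 10/3 * c ^+ 2.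
Proof.
move=> v_le; rewrite /sqnorm.
apply: (@le_trans _ _ (\sum_(i < m) (c * taylor_weight i) ^+ 2)).
  by apply: ler_sum => i _; apply: sqr_le_sqr_norm.
under eq_bigr do rewrite exprMn; rewrite -mulr_sumr mulrC.
by rewrite ler_wpM2r ?sqr_ge0 ?sum_taylor_weight_sqr_le.
Qed.

Lemma frobsq_le_taylor_weight m (M : 'M[R]_m) c :
  (forall i j, `|M i j| <= c * (taylor_weight i * taylor_weight j)) ->
  frobsq M <= (10/3) ^+ 2 * c ^+ 2.
Proof.
move=> M_le; rewrite /frobsq.
apply: (@le_trans _ _ (\sum_(i < m) \sum_(j < m)
    c ^+ 2 * (taylor_weight i ^+ 2 * taylor_weight j ^+ 2))).
  by apply: ler_sum => i _; apply: ler_sum => j _; rewrite -!exprMn sqr_le_sqr_norm.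
set S := \sum_(i < m) taylor_weight i ^+ 2.
have -> : \sum_(i < m) \sum_(j < m) c ^+ 2 * (taylor_weight i ^+ 2 * taylor_weight j ^+ 2)
    = c ^+ 2 * (S * S).
  rewrite mulr_suml mulr_sumr; apply: eq_bigr => i _.
  by rewrite !mulr_sumr.
have S_ge0 : 0 <= S by rewrite sumr_ge0 // => i _; exact: sqr_ge0.
have S_le := sum_taylor_weight_sqr_le m.
by rewrite mulrC expr2 ler_wpM2r ?sqr_ge0 // ler_pM.
Qed.

End TaylorWeights.

Section LocalPolynomialWeights.
Variables (R : realType) (K : R -> R) (Kmax LK : R).
Hypotheses (K_ge0 : forall u, 0 <= K u) (K_supp : forall u, 1 < `|u| -> K u = 0).
Hypotheses (K_ub : forall u, K u <= Kmax) (LK_ge0 : 0 <= LK).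
Hypothesis K_lip : forall u v, `|K u - K v| <= LK * `|u - v|.
Variables (k n : nat) (h : R).
Hypotheses (n_gt0 : (0 < n)%N) (h_ge : 1 / (2 * n%:R) <= h).

Local Notation B := (Bmat K k n h).
Local Notation W := (Wnk K k n h).
Local Notation nh := (n%:R * h).

Definition zarg (x : R) (l : nat) : R := (xpt R n l - x) / h.
Definition kvec (z : R) : 'cV[R]_k.+1 := K z *: Uvec k z.

Lemma n_gt0R : 0 < n%:R :> R.
Proof. by rewrite ltr0n. Qed.

Lemma h_gt0 : 0 < h.
Proof. by apply: lt_le_trans h_ge; rewrite divr_gt0 // mulr_gt0 // n_gt0R. Qed.

Lemma nh_gt0 : 0 < nh.
Proof. by rewrite mulr_gt0 ?n_gt0R ?h_gt0. Qed.

Lemma zargB a b l : zarg a l - zarg b l = (b - a) / h.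
Proof. by rewrite /zarg; field; rewrite lt0r_neq0 ?h_gt0. Qed.

Lemma unit_ind_zarg x l :
  unit_ind (zarg x l) = ((`|l%:R - n%:R * x| <= nh)%R : bool)%:R.
Proof.
rewrite /unit_ind /zarg /xpt; congr ((_ : bool)%:R).
have -> : (l%:R / n%:R - x) / h = (l%:R - n%:R * x) / nh.
  by field; rewrite !lt0r_neq0 ?n_gt0R ?h_gt0.
by rewrite normrM [`|nh^-1|]gtr0_norm ?invr_gt0 ?nh_gt0 // ler_pdivrMr ?nh_gt0 // mul1r.
Qed.

Lemma sum_unit_ind_zarg_le x : \sum_(1 <= l < n.+1) unit_ind (zarg x l) <= 4 * nh.
Proof.
have nh_ge : 1 <= 2 * nh.
  by move: h_ge; rewrite ler_pdivrMr ?mulr_gt0 ?n_gt0R //; lra.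
apply: le_trans (_ : \sum_(0 <= l < n.+1) unit_ind (zarg x l) <= _).
  by rewrite [X in _ <= X](@big_ltn _ _ _ 0) // lerDr unit_ind_ge0.
under eq_bigr do rewrite unit_ind_zarg.
by have := sum_near_le (n%:R * x) n.+1 (ltW nh_gt0); lra.
Qed.

Lemma sum_unit_ind2_zarg_le a b :
  \sum_(1 <= l < n.+1) unit_ind2 (zarg a l) (zarg b l) <= 8 * nh.
Proof.
apply: le_trans (_ : \sum_(1 <= l < n.+1) (unit_ind (zarg a l) + unit_ind (zarg b l)) <= _).
  by apply: ler_sum => l _; apply: unit_ind2_le.
by rewrite big_split /=; have := sum_unit_ind_zarg_le a; have := sum_unit_ind_zarg_le b; lra.
Qed.

Lemma Uvec0 : Uvec k (0 : R) = delta_mx 0 0.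
Proof.
apply/matrixP => i j; rewrite !mxE ord1 eqxx andbT expr0n.
by case: i => [[|i] i_lt] /=; rewrite ?mul0r // fact0 divr1.
Qed.

Lemma Bmat_entry x (i j : 'I_k.+1) : B x i j =
  nh^-1 * \sum_(1 <= l < n.+1) K (zarg x l) * zarg x l ^+ (i + j) / ((i`!)%:R * (j`!)%:R).
Proof.
rewrite /Bmat mxE summxE; congr (_ * _); apply: eq_bigr => l _.
rewrite mxE mxE big_ord1 !mxE /zarg exprD.
by field; rewrite !pnatr_eq0 -!lt0n !fact_gt0.
Qed.

Lemma Bmat_sym x : (B x)^T = B x.
Proof.
rewrite /Bmat linearZ /= linear_sum /=; congr (_ *: _).
by apply: eq_bigr => l _; rewrite linearZ /= trmx_mul trmxK.
Qed.

Lemma qform_Bmat_ge0 x v : 0 <= qform (B x) v.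
Proof.
rewrite /Bmat qformZ qform_sum; apply: mulr_ge0; first by rewrite invr_ge0 ltW ?nh_gt0.
by apply: sumr_ge0 => l _; rewrite qformZ qform_outer mulr_ge0 ?sqr_ge0.
Qed.

Lemma Wnk_invmx x l : W x l = nh^-1 * (invmx (B x) *m kvec (zarg x l)) 0 0.
Proof.
rewrite /Wnk /kvec -mulmxA Uvec0 trmx_delta -rowE -scalemxAr.
by rewrite [row _ _ _ _]mxE [in RHS]mxE /zarg; ring.
Qed.

Local Notation Lp := (LK + 2 * Kmax).

Lemma Lp_ge0 : 0 <= Lp.
Proof. by rewrite addr_ge0 ?mulr_ge0 ?(Kmax_ge0 K_ge0 K_ub). Qed.

Lemma Lp_coef_le (s p : R) : 1 <= p -> s <= 2 * p -> LK + s * Kmax <= Lp * p.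
Proof.
move=> p_ge1 s_le; have Kmax0 := Kmax_ge0 K_ge0 K_ub.
have : LK <= LK * p by rewrite ler_peMr.
have : s * Kmax <= 2 * p * Kmax by rewrite ler_wpM2r.
rewrite mulrDl; lra.
Qed.

Lemma Lp_weight_le (i : nat) :
  (LK + i%:R * Kmax) / (i`!)%:R <= Lp * taylor_weight R i.
Proof.
have m_ge1 : 1 <= (maxn 1 i)%:R :> R by rewrite ler1n leq_maxl.
have i_le : i%:R <= (maxn 1 i)%:R :> R by rewrite ler_nat leq_maxr.
by rewrite /taylor_weight mulrA ler_wpM2r ?invr_ge0 // Lp_coef_le //; lra.
Qed.

Lemma Lp_weight2_le (i j : nat) : (LK + (i + j)%:R * Kmax) / ((i`!)%:R * (j`!)%:R)
  <= Lp * (taylor_weight R i * taylor_weight R j).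
Proof.
rewrite /taylor_weight mulf_div mulrA ler_wpM2r ?invr_ge0 ?mulr_ge0 //.
set mi := (maxn 1 i)%:R; set mj := (maxn 1 j)%:R.
have mi_ge1 : 1 <= mi :> R by rewrite ler1n leq_maxl.
have mj_ge1 : 1 <= mj :> R by rewrite ler1n leq_maxl.
have i_le : i%:R <= mi * mj :> R.
  by rewrite (le_trans _ (ler_peMr _ mj_ge1)) ?ler_nat ?leq_maxr // (le_trans ler01).
have j_le : j%:R <= mi * mj :> R.
  by rewrite (le_trans _ (ler_peMl _ mi_ge1)) ?ler_nat ?leq_maxr // (le_trans ler01).
apply: Lp_coef_le; first by rewrite -[1]mulr1 ler_pM.
by rewrite natrD; lra.
Qed.

Lemma kvec_entry z i : kvec z i 0 = K z * z ^+ i / (i`!)%:R.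
Proof. by rewrite !mxE mulrA. Qed.

Lemma sqnorm_kvec_le z : sqnorm (kvec z) <= 10/3 * Kmax ^+ 2 * unit_ind z.
Proof.
have -> : 10/3 * Kmax ^+ 2 * unit_ind z = 10/3 * (Kmax * unit_ind z) ^+ 2.
  by rewrite exprMn unit_ind_sqr [RHS]mulrA.
apply: sqnorm_le_taylor_weight => i.
rewrite kvec_entry normrM [`|_^-1|]ger0_norm ?invr_ge0 //.
by apply: ler_pM; rewrite ?invr_ge0 // ?normr_kmoment_le ?invfact_le_taylor_weight.
Qed.

Lemma sqnorm_kvecB_le z z' : sqnorm (kvec z - kvec z')
  <= 10/3 * Lp ^+ 2 * (z - z') ^+ 2 * unit_ind2 z z'.
Proof.
have -> : 10/3 * Lp ^+ 2 * (z - z') ^+ 2 * unit_ind2 z z'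
    = 10/3 * (Lp * `|z - z'| * unit_ind2 z z') ^+ 2.
  by rewrite !exprMn unit_ind2_sqr real_normK ?num_real // !mulrA.
apply: sqnorm_le_taylor_weight => i.
have -> : (kvec z - kvec z') i 0 = (K z * z ^+ i - K z' * z' ^+ i) / (i`!)%:R.
  by rewrite !mxE; ring.
rewrite normrM [`|_^-1|]ger0_norm ?invr_ge0 //.
set d := `|z - z'| * unit_ind2 z z'.
have d_ge0 : 0 <= d by rewrite mulr_ge0 ?unit_ind2_ge0.
apply: le_trans (_ : (LK + i%:R * Kmax) / (i`!)%:R * d <= _).
  rewrite mulrAC /d mulrA ler_wpM2r ?invr_ge0 //.
  exact: kmoment_lipschitz.
have -> : Lp * `|z - z'| * unit_ind2 z z' * taylor_weight R i = Lp * taylor_weight R i * d.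
  by rewrite /d; ring.
by rewrite ler_wpM2r ?Lp_weight_le.
Qed.

Lemma BmatB_entry_le a b (i j : 'I_k.+1) : `|(B b - B a) i j|
  <= 8 * Lp * (`|a - b| / h) * (taylor_weight R i * taylor_weight R j).
Proof.
set f := ((i`!)%:R * (j`!)%:R : R); set d := `|a - b| / h.
have f_gt0 : 0 < f by rewrite mulr_gt0 ?ltr0n ?fact_gt0.
have d_ge0 : 0 <= d by rewrite divr_ge0 ?normr_ge0 ?ltW ?h_gt0.
set c := Lp * (taylor_weight R i * taylor_weight R j) * d.
have term_le l :
    `|K (zarg b l) * zarg b l ^+ (i + j) / f - K (zarg a l) * zarg a l ^+ (i + j) / f|
    <= c * unit_ind2 (zarg b l) (zarg a l).
  have fV_ge0 : 0 <= f^-1 by rewrite invr_ge0 ltW.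
  rewrite -mulrBl normrM [`|f^-1|]ger0_norm //.
  have := kmoment_lipschitz K_ge0 K_supp K_ub K_lip (i + j)%N (zarg b l) (zarg a l).
  move=> /(ler_wpM2r fV_ge0)/le_trans; apply.
  rewrite zargB normrM [`|h^-1|]gtr0_norm ?invr_gt0 ?h_gt0 // -/d.
  rewrite mulrAC; apply: ler_wpM2r; first exact: unit_ind2_ge0.
  by rewrite mulrAC /c; apply: ler_wpM2r => //; apply: Lp_weight2_le.
have -> : (B b - B a) i j = B b i j - B a i j by rewrite !mxE.
rewrite !Bmat_entry -mulrBr -sumrB normrM [`|nh^-1|]gtr0_norm ?invr_gt0 ?nh_gt0 //.
apply: le_trans (_ : nh^-1 * (c * (8 * nh)) <= _).
  apply: ler_wpM2l; first by rewrite invr_ge0 ltW ?nh_gt0.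
  apply: le_trans (ler_norm_sum _ _ _) _; rewrite -/f.
  apply: le_trans (ler_sum _ (fun l _ => term_le l)) _.
  rewrite -mulr_sumr; apply: ler_wpM2l; last exact: sum_unit_ind2_zarg_le.
  by rewrite /c mulr_ge0 // mulr_ge0 ?Lp_ge0 // mulr_ge0 ?taylor_weight_ge0.
rewrite le_eqVlt; apply/orP; left; apply/eqP.
by rewrite /c; field; rewrite !lt0r_neq0 ?n_gt0R ?h_gt0.
Qed.

Lemma sum_sqnorm_kvec_le x :
  \sum_(1 <= l < n.+1) sqnorm (kvec (zarg x l)) <= 40/3 * Kmax ^+ 2 * nh.
Proof.
apply: le_trans (_ : \sum_(1 <= l < n.+1) 10/3 * Kmax ^+ 2 * unit_ind (zarg x l) <= _).
  by apply: ler_sum => l _; apply: sqnorm_kvec_le.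
rewrite -mulr_sumr.
have := sum_unit_ind_zarg_le x; have := sqr_ge0 Kmax; nra.
Qed.

Lemma sum_sqnorm_kvecB_le a b :
  \sum_(1 <= l < n.+1) sqnorm (kvec (zarg a l) - kvec (zarg b l))
  <= 80/3 * Lp ^+ 2 * (`|a - b| / h) ^+ 2 * nh.
Proof.
set D := 10/3 * Lp ^+ 2 * (`|a - b| / h) ^+ 2.
apply: le_trans (_ : \sum_(1 <= l < n.+1) D * unit_ind2 (zarg a l) (zarg b l) <= _).
  apply: ler_sum => l _; apply: le_trans (sqnorm_kvecB_le _ _) _.
  rewrite zargB -[((b - a) / h) ^+ 2]real_normK ?num_real // normrM distrC.
  by rewrite [`|h^-1|]gtr0_norm ?invr_gt0 ?h_gt0.
rewrite -mulr_sumr.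
have D_ge0 : 0 <= D.
  by rewrite /D; have := sqr_ge0 Lp; have := sqr_ge0 (`|a - b| / h); nra.
have -> : 80/3 * Lp ^+ 2 * (`|a - b| / h) ^+ 2 * nh = D * (8 * nh) by rewrite /D; ring.
by rewrite ler_wpM2l ?sum_unit_ind2_zarg_le.
Qed.

Lemma normr_Bmat_entry_le x (i j : 'I_k.+1) : `|B x i j| <= 4 * Kmax.
Proof.
rewrite Bmat_entry normrM [`|nh^-1|]gtr0_norm ?invr_gt0 ?nh_gt0 // ler_pdivrMl ?nh_gt0 //.
apply: le_trans (ler_norm_sum _ _ _) _.
apply: le_trans (_ : \sum_(1 <= l < n.+1) Kmax * unit_ind (zarg x l) <= _).
  apply: ler_sum => l _; rewrite normrM -[X in _ <= X]mulr1.
  apply: ler_pM => //; first exact: normr_kmoment_le.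
  have fact_ge1 : 1 <= (i`!)%:R * (j`!)%:R :> R by rewrite -natrM ler1n muln_gt0 !fact_gt0.
  by rewrite ger0_norm ?invr_ge0 ?invf_le1 // (lt_le_trans ltr01).
rewrite -mulr_sumr.
have := sum_unit_ind_zarg_le x; have := Kmax_ge0 K_ge0 K_ub; nra.
Qed.

Lemma coercive_Bmat_le x lam : coercive lam (B x) -> lam <= 4 * Kmax.
Proof.
move=> /(_ (delta_mx 0 0)); rewrite sqnorm_delta qform_delta mulr1 => /le_trans; apply.
exact: le_trans (ler_norm _) (normr_Bmat_entry_le _ _ _).
Qed.

Lemma Wnk_sqr_le lam x l : 0 < lam -> coercive lam (B x) ->
  W x l ^+ 2 <= sqnorm (kvec (zarg x l)) / (lam * nh) ^+ 2.
Proof.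
move=> lam_gt0 B_coer; rewrite Wnk_invmx exprMn.
have -> : sqnorm (kvec (zarg x l)) / (lam * nh) ^+ 2
    = nh^-1 ^+ 2 * (sqnorm (kvec (zarg x l)) / lam ^+ 2).
  by field; rewrite !lt0r_neq0 ?n_gt0R ?h_gt0.
rewrite ler_wpM2l ?sqr_ge0 //.
exact: le_trans (entry_sqr_le_sqnorm _ _) (sqnorm_invmx_le _ lam_gt0 B_coer).
Qed.

Section DifferenceBounds.
Variables (lam a b : R).
Hypotheses (lam_gt0 : 0 < lam) (Ba_coer : coercive lam (B a)).
Hypothesis Bb_coer : coercive lam (B b).

Lemma sum_Wnk_subr_sqr_le_const :
  \sum_(1 <= l < n.+1) (W a l - W b l) ^+ 2 <= 256 * (Kmax / lam) ^+ 2 / nh.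
Proof.
set q := (lam * nh) ^+ 2.
have q_gt0 : 0 < q by rewrite /q exprn_gt0 // mulr_gt0 ?nh_gt0.
have qV_ge0 : 0 <= q^-1 by rewrite invr_ge0 ltW.
apply: le_trans (_ : \sum_(1 <= l < n.+1)
    2 * (sqnorm (kvec (zarg a l)) + sqnorm (kvec (zarg b l))) / q <= _).
  apply: ler_sum => l _.
  have := sqrD_le_weighted (W a l) (- W b l) ltr01; rewrite invr1 sqrrN.
  have := Wnk_sqr_le l lam_gt0 Ba_coer; have := Wnk_sqr_le l lam_gt0 Bb_coer.
  rewrite -/q; lra.
rewrite -mulr_suml -mulr_sumr big_split /=.
have := sum_sqnorm_kvec_le a; have := sum_sqnorm_kvec_le b.
move=> Sa_le Sb_le; apply: le_trans (_ : 2 * (2 * (40/3 * Kmax ^+ 2 * nh)) / q <= _).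
  by rewrite ler_wpM2r // ler_wpM2l //; lra.
have -> : 2 * (2 * (40/3 * Kmax ^+ 2 * nh)) / q = 160/3 * ((Kmax / lam) ^+ 2 / nh).
  by rewrite /q; field; rewrite !lt0r_neq0 ?n_gt0R ?h_gt0.
have : 0 <= (Kmax / lam) ^+ 2 / nh by rewrite divr_ge0 ?sqr_ge0 ?ltW ?nh_gt0.
lra.
Qed.

Lemma Wnk_subr_invmx l : W a l - W b l = nh^-1 *
  ((invmx (B a) *m (kvec (zarg a l) - kvec (zarg b l))) 0 0
   + (invmx (B a) *m ((B b - B a) *m (invmx (B b) *m kvec (zarg b l)))) 0 0).
Proof.
have Ba_unit := coercive_unitmx lam_gt0 Ba_coer.
have Bb_unit := coercive_unitmx lam_gt0 Bb_coer.
have E : invmx (B a) *m (kvec (zarg a l) - kvec (zarg b l))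
    + invmx (B a) *m ((B b - B a) *m (invmx (B b) *m kvec (zarg b l)))
    = invmx (B a) *m kvec (zarg a l) - invmx (B b) *m kvec (zarg b l).
  by rewrite mulmxBl !mulmxBr mulKVmx // mulKmx // addrA subrK.
rewrite !Wnk_invmx -mulrBr; congr (_ * _).
move: (congr1 (fun M : 'cV[R]_k.+1 => M 0 0) E) => /=.
by rewrite [in X in X = _]mxE [in X in _ = X]mxE [X in _ = _ + X]mxE => <-.
Qed.

Lemma Wnk_subr_sqr_le l : (W a l - W b l) ^+ 2
  <= (5 * lam ^+ 2 * sqnorm (kvec (zarg a l) - kvec (zarg b l))
      + 5/4 * frobsq (B b - B a) * sqnorm (kvec (zarg b l))) / (lam ^+ 2 * nh) ^+ 2.
Proof.
set S1 := sqnorm _; set S2 := sqnorm _; set F := frobsq _.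
have lam2_gt0 : 0 < lam ^+ 2 by rewrite exprn_gt0.
rewrite Wnk_subr_invmx exprMn.
set P := (invmx (B a) *m (kvec (zarg a l) - kvec (zarg b l))) 0 0.
set Q := (invmx (B a) *m ((B b - B a) *m (invmx (B b) *m kvec (zarg b l)))) 0 0.
have P_le : P ^+ 2 <= S1 / lam ^+ 2.
  exact: le_trans (entry_sqr_le_sqnorm _ _) (sqnorm_invmx_le _ lam_gt0 Ba_coer).
have Q_le : Q ^+ 2 <= F * S2 / lam ^+ 2 / lam ^+ 2.
  apply: le_trans (entry_sqr_le_sqnorm _ _) _.
  apply: le_trans (sqnorm_invmx_le _ lam_gt0 Ba_coer) _.
  apply: ler_wpM2r; first by rewrite invr_ge0 ltW.
  rewrite -mulrA; apply: le_trans (sqnorm_mulmx_le _ _) _.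
  by rewrite ler_wpM2l ?frobsq_ge0 // sqnorm_invmx_le.
apply: le_trans
    (_ : nh^-1 ^+ 2 * (5 * (S1 / lam ^+ 2) + 5/4 * (F * S2 / lam ^+ 2 / lam ^+ 2)) <= _).
  rewrite ler_wpM2l ?sqr_ge0 //.
  have := sqrD_le_weighted P Q (ltr0n _ 4); lra.
rewrite le_eqVlt; apply/orP; left; apply/eqP.
by field; rewrite !lt0r_neq0 ?n_gt0R ?h_gt0.
Qed.

(* 5 * 16 * 80/3 + 5/4 * (10/3)^2 * 64 * 40/3 = 377600/27 < 256 * 64. *)
Lemma lip_numerator_le :
  5 * lam ^+ 2 * \sum_(1 <= l < n.+1) sqnorm (kvec (zarg a l) - kvec (zarg b l))
  + 5/4 * frobsq (B b - B a) * \sum_(1 <= l < n.+1) sqnorm (kvec (zarg b l))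
  <= 256 * 64 * (Kmax ^+ 2 * Lp ^+ 2 * (`|a - b| / h) ^+ 2 * nh).
Proof.
set d := `|a - b| / h; set F := frobsq (B b - B a).
set S1 := \sum_(1 <= l < n.+1) _; set S2 := \sum_(1 <= l < n.+1) _.
set Y := Kmax ^+ 2 * Lp ^+ 2 * d ^+ 2 * nh.
have S1_ge0 : 0 <= S1 by rewrite sumr_ge0 // => l _; exact: sqnorm_ge0.
have S2_ge0 : 0 <= S2 by rewrite sumr_ge0 // => l _; exact: sqnorm_ge0.
have lam2_le : lam ^+ 2 <= 16 * Kmax ^+ 2.
  have -> : 16 * Kmax ^+ 2 = (4 * Kmax) ^+ 2 by ring.
  rewrite ler_sqr ?nnegrE ?(ltW lam_gt0) ?mulr_ge0 ?(Kmax_ge0 K_ge0 K_ub) //.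
  exact: coercive_Bmat_le Ba_coer.
have : lam ^+ 2 * S1 <= 16 * (80/3) * Y.
  apply: le_trans (_ : 16 * Kmax ^+ 2 * (80/3 * Lp ^+ 2 * d ^+ 2 * nh) <= _).
    by rewrite ler_pM ?sqr_ge0 ?sum_sqnorm_kvecB_le.
  by rewrite /Y le_eqVlt; apply/orP; left; apply/eqP; ring.
have : F * S2 <= (10/3) ^+ 2 * 64 * (40/3) * Y.
  apply: le_trans (_ : (10/3) ^+ 2 * (8 * Lp * d) ^+ 2 * (40/3 * Kmax ^+ 2 * nh) <= _).
    rewrite ler_pM ?frobsq_ge0 ?sum_sqnorm_kvec_le //.
    exact: frobsq_le_taylor_weight (BmatB_entry_le a b).
  by rewrite /Y le_eqVlt; apply/orP; left; apply/eqP; ring.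
have : 0 <= Y by rewrite /Y -!exprMn; apply: mulr_ge0; [exact: sqr_ge0 | exact: ltW nh_gt0].
lra.
Qed.

Lemma sum_Wnk_subr_sqr_le_lip : \sum_(1 <= l < n.+1) (W a l - W b l) ^+ 2
  <= 256 * (Kmax / lam) ^+ 2 * (8 * Lp / lam * `|a - b|) ^+ 2 / (n%:R * h ^+ 3).
Proof.
set q := (lam ^+ 2 * nh) ^+ 2.
have q_gt0 : 0 < q by rewrite /q exprn_gt0 // mulr_gt0 ?exprn_gt0 ?nh_gt0.
apply: le_trans (ler_sum _ (fun l _ => Wnk_subr_sqr_le l)) _.
rewrite -/q -mulr_suml big_split /= -!mulr_sumr.
apply: le_trans (ler_wpM2r _ lip_numerator_le) _; first by rewrite invr_ge0 ltW.
rewrite le_eqVlt; apply/orP; left; apply/eqP.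
by rewrite /q; field; rewrite !lt0r_neq0 ?n_gt0R ?h_gt0.
Qed.

Lemma sum_Wnk_subr_sqr_le : \sum_(1 <= l < n.+1) (W a l - W b l) ^+ 2
  <= 256 * (Kmax / lam) ^+ 2 / n%:R / h ^+ 3 * Num.min (8 * Lp / lam * `|a - b|) h ^+ 2.
Proof.
have [_ | _] := leP (8 * Lp / lam * `|a - b|) h.
  apply: le_trans sum_Wnk_subr_sqr_le_lip _.
  rewrite le_eqVlt; apply/orP; left; apply/eqP.
  by field; rewrite !lt0r_neq0 ?n_gt0R ?h_gt0.
apply: le_trans sum_Wnk_subr_sqr_le_const _.
rewrite le_eqVlt; apply/orP; left; apply/eqP.
by field; rewrite !lt0r_neq0 ?n_gt0R ?h_gt0.
Qed.

End DifferenceBounds.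

End LocalPolynomialWeights.

Lemma Wconst_ge (R : realType) (beta Kmax LK lambda0 : R) :
  256 * (Kmax / lambda0) ^+ 2 <= Wconst beta Kmax LK lambda0.
Proof.
rewrite /Wconst le_max /Cstar; apply/orP; left.
by rewrite le_eqVlt; apply/orP; left; apply/eqP; ring.
Qed.

Lemma L2c_ge (R : realType) (beta Kmax LK : R) : 0 < beta -> 0 <= LK + 2 * Kmax ->
  LK + 2 * Kmax <= L2c beta Kmax LK.
Proof.
move=> beta_gt0 L_ge0; have ceil_ge1 : 1 <= (Num.ceil beta)%:~R :> R.
  by rewrite ler1z -gtz0_ge1 ceil_gt0.
have -> : L2c beta Kmax LK = (Num.ceil beta)%:~R * (LK + 2 * Kmax) by rewrite /L2c; ring.
by rewrite ler_peMl.
Qed.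

Lemma min_sqr_le (R : realDomainType) (x y c : R) : 0 <= x -> x <= y -> 0 <= c ->
  Num.min x c ^+ 2 <= Num.min y c ^+ 2.
Proof.
move=> x_ge0 xy c_ge0.
have min_ge0 z : 0 <= z -> 0 <= Num.min z c by move=> z_ge0; rewrite le_min z_ge0.
rewrite ler_sqr ?nnegrE ?min_ge0 ?(le_trans x_ge0) //.
by rewrite le_min !ge_min xy lexx !orbT.
Qed.

Theorem mainTheorem16 (R : realType) (K : R -> R)
    (Kmin Kmax Delta LK beta lambda0 h : R) (n : nat) (a b : R)
    (* (K1) *)
    (K_ge0 : forall u, 0 <= K u)
    (K_int : (\int[lebesgue_measure]_x (K x)%:E = 1)%E)
    (K_supp : forall u, 1 < `|u| -> K u = 0)
    (Kmin_gt0 : 0 < Kmin) (Kmax_gt0 : 0 < Kmax) (Delta_gt0 : 0 < Delta)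
    (K_lb : forall u, Kmin * ((`|u| <= Delta)%R : bool)%:R <= K u)
    (K_ub : forall u, K u <= Kmax)
    (* (K2) *)
    (LK_ge0 : 0 <= LK)
    (K_lip : forall u v, `|K u - K v| <= LK * `|u - v|)
    (* order of the local polynomial estimator *)
    (beta_gt0 : 0 < beta)
    (* standing assumptions *)
    (n_gt0 : (0 < n)%N)
    (h_ge : 1 / (2 * n%:R) <= h)
    (lambda0_gt0 : 0 < lambda0)
    (B_eig : forall x : R, 0 <= x <= 1 ->
       forall mu : R, eigenvalue (Bmat K (k0 beta) n h x) mu -> lambda0 <= mu)
    (ha : 0 <= a <= 1) (hb : 0 <= b <= 1) :
  \sum_(1 <= k < n.+1) (Wnk K (k0 beta) n h a k - Wnk K (k0 beta) n h b k) ^+ 2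
  <= Wconst beta Kmax LK lambda0 / n%:R / h ^+ 3 *
     (Num.min (8 * L2c beta Kmax LK / lambda0 * `|a - b|) h) ^+ 2.
Proof.
have h_gt0 : 0 < h := h_gt0 n_gt0 h_ge.
have Lp_ge0 : 0 <= LK + 2 * Kmax := Lp_ge0 K_ge0 K_ub LK_ge0.
have B_coer x : 0 <= x <= 1 -> coercive lambda0 (Bmat K (k0 beta) n h x).
  move=> hx; apply: eigenvalue_lb_coercive (B_eig x hx); first exact: Bmat_sym.
  by move=> v; apply: qform_Bmat_ge0.
apply: le_trans (sum_Wnk_subr_sqr_le K_ge0 K_supp K_ub LK_ge0 K_lip n_gt0 h_ge
  lambda0_gt0 (B_coer a ha) (B_coer b hb)) _.
have scale (c m : R) : c / n%:R / h ^+ 3 * m = c * m / (n%:R * h ^+ 3).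
  by field; rewrite !lt0r_neq0 ?ltr0n.
rewrite !scale; apply: ler_wpM2r.
  by rewrite invr_ge0 mulr_ge0 ?exprn_ge0 // ltW.
apply: ler_pM; rewrite ?sqr_ge0 ?Wconst_ge //; first by rewrite mulr_ge0 ?sqr_ge0.
apply: min_sqr_le; last exact: ltW.
  by rewrite mulr_ge0 // divr_ge0 ?mulr_ge0 // ltW.
apply: ler_wpM2r => //; apply: ler_wpM2r; first by rewrite invr_ge0 ltW.
by apply: ler_wpM2l => //; apply: L2c_ge.
Qed.
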